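(* Let $\Lambda\subset H^0(\mathbb{P}^r,\mathcal{O}_{\mathbb{P}^r}(2))$ be a linear system of quadrics with $\dim\Lambda=\alpha+1$, let $\Phi:\mathbb{P}^r\dashrightarrow\mathbb{P}^\alpha$ be the associated rational map, and let $X$ be the base scheme of $\Lambda$. Let $W\subset G(1,r)$ be the Zariski closure of the set of lines $L\subset\mathbb{P}^r$ with $L\cap X=\emptyset$ for which $\Phi_{|L}:L\to\Phi(L)$ is a double covering of a line. Then $W=\emptyset$ if and only if all fibres of $\Phi$ are linear spaces.
   Context: Over $\mathbb{C}$. The fibre of $\Phi$ through $P\in\mathbb{P}^r\setminus X$ means the Zariski closure $\overline{\Phi^{-1}(\Phi(P))}$. $G(1,r)$ is the Grassmannian of lines in $\mathbb{P}^r$. *)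

From HB Require Import structures.
From mathcomp Require Import all_boot all_order all_algebra.
From mathcomp Require Import reals.
From mathcomp.real_closed Require Import complex.
From mathcomp Require Import mpoly.
Import GRing.Theory Num.Theory.

Set Implicit Arguments.
Unset Strict Implicit.
Unset Printing Implicit Defensive.

Local Open Scope ring_scope.

(* The ground field is C, modelled as R[i] for R : realType (any realType is
   isomorphic to the real numbers).  A point of P^(n-1) is represented by a
   nonzero row vector of 'rV[R[i]]_n, up to nonzero scalars. *)

Definition proj_eq (R : realType) (k : nat) (u v : 'rV[R[i]]_k) : Prop :=
  exists2 c : R[i], c != 0 & v = c *: u.

Definition qform (R : realType) (n : nat) (A : 'M[R[i]]_n) (x : 'rV[R[i]]_n) : R[i] :=
  (x *m A *m x^T) 0 0.

(* Lambda is spanned by the quadrics q_0..q_alpha (given by matrices A j);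
   Phi = [q_0 : ... : q_alpha] is the associated rational map. *)
Definition Phi (R : realType) (n m : nat) (A : 'I_m -> 'M[R[i]]_n)
  (x : 'rV[R[i]]_n) : 'rV[R[i]]_m := \row_j qform (A j) x.

(* the quadrics q_j are linearly independent, i.e. dim Lambda = m *)
Definition lin_indep_quadrics (R : realType) (n m : nat) (A : 'I_m -> 'M[R[i]]_n) : Prop :=
  forall c : 'I_m -> R[i],
    (forall x : 'rV[R[i]]_n, \sum_(j < m) c j * qform (A j) x = 0) ->
    forall j, c j = 0.

(* Zariski closure in P^(n-1) of a (scale invariant) set S of points:
   the points where every polynomial vanishing on (the cone over) S vanishes,
   i.e. V(I(S)). *)
Definition zclosure (R : realType) (n : nat) (S : 'rV[R[i]]_n -> Prop)
  (x : 'rV[R[i]]_n) : Prop :=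
  forall p : {mpoly R[i][n]},
    (forall y : 'rV[R[i]]_n, y != 0 -> S y -> p.@[fun k => y 0 k] = 0) ->
    p.@[fun k => x 0 k] = 0.

(* fibre of Phi through P (P outside the base locus X):
   Zariski closure of Phi^-1(Phi(P)) *)
Definition fibre (R : realType) (n m : nat) (A : 'I_m -> 'M[R[i]]_n)
  (P : 'rV[R[i]]_n) : 'rV[R[i]]_n -> Prop :=
  zclosure (fun Q => Phi A Q != 0 /\ proj_eq (Phi A P) (Phi A Q)).

Definition is_linear_space (R : realType) (n : nat) (F : 'rV[R[i]]_n -> Prop) : Prop :=
  exists V : 'M[R[i]]_n, forall x, x != 0 -> (F x <-> (x <= V)%MS).

(* Lines of P^(n-1) are given by pairs (u, v) of independent vectors,
   L = P(span(u,v)); x is on L iff x lies in the row space of col_mx u v. *)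
Definition is_line (R : realType) (n : nat) (u v : 'rV[R[i]]_n) : Prop :=
  \rank (col_mx u v) = 2%N.

(* L cap X = emptyset, X the base locus of Lambda *)
Definition line_misses_base (R : realType) (n m : nat) (A : 'I_m -> 'M[R[i]]_n)
  (u v : 'rV[R[i]]_n) : Prop :=
  forall x, x != 0 -> (x <= col_mx u v)%MS -> Phi A x != 0.

Definition two_preimages (R : realType) (n m : nat) (A : 'I_m -> 'M[R[i]]_n)
  (u v : 'rV[R[i]]_n) (y : 'rV[R[i]]_m) : Prop :=
  exists x1 x2 : 'rV[R[i]]_n,
    [/\ x1 != 0, x2 != 0, (x1 <= col_mx u v)%MS, (x2 <= col_mx u v)%MS &
     [/\ ~ proj_eq x1 x2, proj_eq y (Phi A x1), proj_eq y (Phi A x2) &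
      forall x, x != 0 -> (x <= col_mx u v)%MS -> proj_eq y (Phi A x) ->
        proj_eq x1 x \/ proj_eq x2 x]].

(* Phi_|L : L -> Phi(L) is a double covering of a line: Phi(L) is a line
   P(span(w1,w2)) of P^alpha and, outside finitely many points of it, each
   fibre of Phi_|L has exactly two points (degree 2). *)
Definition double_cover_of_line (R : realType) (n m : nat) (A : 'I_m -> 'M[R[i]]_n)
  (u v : 'rV[R[i]]_n) : Prop :=
  exists w1 w2 : 'rV[R[i]]_m,
    [/\ \rank (col_mx w1 w2) = 2%N,
     (forall x, x != 0 -> (x <= col_mx u v)%MS -> (Phi A x <= col_mx w1 w2)%MS),
     (forall y, y != 0 -> (y <= col_mx w1 w2)%MS ->
        exists x, [/\ x != 0, (x <= col_mx u v)%MS & proj_eq y (Phi A x)]) &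
     exists E : seq 'rV[R[i]]_m,
       forall y, y != 0 -> (y <= col_mx w1 w2)%MS ->
         (forall e, e \in E -> ~ proj_eq e y) -> two_preimages A u v y].

Definition good_line (R : realType) (n m : nat) (A : 'I_m -> 'M[R[i]]_n)
  (u v : 'rV[R[i]]_n) : Prop :=
  [/\ is_line u v, line_misses_base A u v & double_cover_of_line A u v].

(* Pluecker coordinates of the line spanned by u, v (all p_ij = u_i v_j - u_j v_i,
   arranged as a vector of length n*n) *)
Definition pluecker (R : realType) (n : nat) (u v : 'rV[R[i]]_n) : 'rV[R[i]]_(n * n) :=
  mxvec (u^T *m v - v^T *m u).

(* W = Zariski closure in G(1, n-1) (via the Pluecker embedding) of the good lines *)
Definition in_W (R : realType) (n m : nat) (A : 'I_m -> 'M[R[i]]_n)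
  (u v : 'rV[R[i]]_n) : Prop :=
  is_line u v /\
  forall p : {mpoly R[i][n * n]},
    (forall u' v', good_line A u' v' -> p.@[fun k => pluecker u' v' 0 k] = 0) ->
    p.@[fun k => pluecker u v 0 k] = 0.

(* If Phi(x2) = g Phi(x1) with g <> 0, then along the line through x1 and x2
   Phi(s x1 + t x2) = (s^2 + g t^2) Phi(x1) + s t B(x1, x2), B the polar form.
   When B(x1, x2) is not proportional to Phi(x1), the line misses the base
   locus and Phi maps it 2:1 onto the line through Phi(x1) and B(x1, x2): the
   preimages of p Phi(x1) + q B(x1, x2) are the points z x1 + x2 with
   q z^2 - p z + q g = 0.
   Otherwise Phi is proportional to Phi(x1) on the whole line, so a polynomial
   vanishing on the preimage of Phi(x1) vanishes on the line.  Hence, when no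
   line is of the first kind, every fibre contains the span of the preimage
   of Phi(P), and linear forms show that it is contained in it.  Conversely,
   two points of a generic fibre of a good line span it, so a linear fibre
   would contain the whole line, whose image is not a single point. *)

From HB Require Import structures.
From mathcomp Require Import all_boot all_order all_algebra.
From mathcomp Require Import reals.
From mathcomp.real_closed Require Import complex.
From mathcomp Require Import mpoly.
From mathcomp Require Import ring zify.
From Stdlib Require Import Classical.
Import GRing.Theory Num.Theory.
Set Implicit Arguments.
Unset Strict Implicit.
Unset Printing Implicit Defensive.
Local Open Scope ring_scope.

Section LinePairs.
Variables (F : fieldType) (n : nat).
Implicit Types (u v x : 'rV[F]_n) (s t : F).

Definition free2 u v := forall s t, s *: u + t *: v = 0 -> s = 0 /\ t = 0.

Lemma mul_row_col_mx2 (D : 'M[F]_(1, 1 + 1)) u v :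
  D *m col_mx u v = lsubmx D 0 0 *: u + rsubmx D 0 0 *: v.
Proof.
by rewrite -{1}[D]hsubmxK mul_row_col {1}(mx11_scalar (lsubmx D))
  {1}(mx11_scalar (rsubmx D)) !mul_scalar_mx.
Qed.

Lemma free2P u v : \rank (col_mx u v) = 2%N <-> free2 u v.
Proof.
split=> [rk2 s t suv0 | free_uv].
- have /mulmx_free_eq0 : row_free (col_mx u v) by rewrite /row_free rk2.
  move=> /(_ _ (row_mx s%:M t%:M)); rewrite mul_row_col_mx2 row_mxKl row_mxKr.
  rewrite !mxE /= !mulr1n suv0 eqxx => /esym/eqP/matrixP D0; split.
  + by have := D0 0 (lshift 1 0); rewrite row_mxEl !mxE /= mulr1n.
  + by have := D0 0 (rshift 1 0); rewrite row_mxEr !mxE /= mulr1n.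
- apply/eqP; rewrite -[2%N]/(1 + 1)%N; apply: inj_row_free => D.
  rewrite mul_row_col_mx2 => /free_uv [D1 D2].
  by rewrite -[D]hsubmxK (mx11_scalar (lsubmx D)) (mx11_scalar (rsubmx D)) D1 D2
     !raddf0 row_mx0.
Qed.

Lemma sub_col_mx2l u v : (u <= col_mx u v)%MS.
Proof. by have := submx_refl (col_mx u v); rewrite col_mx_sub => /andP[]. Qed.

Lemma sub_col_mx2r u v : (v <= col_mx u v)%MS.
Proof. by have := submx_refl (col_mx u v); rewrite col_mx_sub => /andP[]. Qed.

Lemma comb_sub_col_mx2 u v s t : ((s *: u + t *: v)%R <= col_mx u v)%MS.
Proof. by apply: addmx_sub; apply: scalemx_sub; rewrite ?sub_col_mx2l ?sub_col_mx2r. Qed.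

Lemma comb1_sub_col_mx2 u v s : ((s *: u + v)%R <= col_mx u v)%MS.
Proof. by have := comb_sub_col_mx2 u v s 1; rewrite scale1r. Qed.

Lemma sub_col_mx2P x u v :
  (x <= col_mx u v)%MS <-> exists s t, x = s *: u + t *: v.
Proof.
split=> [/submxP [D ->] | [s [t ->]]]; last exact: comb_sub_col_mx2.
by rewrite mul_row_col_mx2; eexists; eexists.
Qed.

Lemma free2_coef u v s t s' t' : free2 u v ->
  s *: u + t *: v = s' *: u + t' *: v -> s = s' /\ t = t'.
Proof.
move=> free_uv e; have [] : s - s' = 0 /\ t - t' = 0.
  by apply: free_uv; rewrite !scalerBl addrACA -opprD e subrr.
by move=> /eqP; rewrite subr_eq0 => /eqP -> /eqP; rewrite subr_eq0 => /eqP ->.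
Qed.

Lemma free2_comb_neq0 u v s t : free2 u v -> t != 0 -> s *: u + t *: v != 0.
Proof. by move=> free_uv t0; apply/eqP => /free_uv [_ /eqP]; apply/negP. Qed.

Lemma free2_comb1_neq0 u v s : free2 u v -> s *: u + v != 0.
Proof.
by move=> free_uv; have := free2_comb_neq0 s free_uv (oner_neq0 F); rewrite scale1r.
Qed.

Lemma free2_neq0l u v : free2 u v -> u != 0.
Proof.
move=> free_uv; apply/eqP => u0.
have [/eqP] : (1 : F) = 0 /\ (0 : F) = 0.
  by apply: free_uv; rewrite u0 scaler0 scale0r addr0.
by rewrite oner_eq0.
Qed.

Lemma free2_neq0r u v : free2 u v -> v != 0.
Proof.
move=> free_uv; have := free2_comb_neq0 0 free_uv (oner_neq0 F).
by rewrite scale0r add0r scale1r.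
Qed.

Lemma free2_nmultiple u v : u != 0 -> ~ (exists c, v = c *: u) -> free2 u v.
Proof.
move=> u0 nmul s t; have [-> | t0] := eqVneq t 0.
  by rewrite scale0r addr0 => /eqP; rewrite scaler_eq0 (negbTE u0) orbF => /eqP.
move=> /eqP; rewrite addrC addr_eq0 => /eqP tv; case: nmul.
exists (- (t^-1 * s)).
by rewrite -[v]scale1r -(mulVf t0) -scalerA tv scalerN scalerA scaleNr.
Qed.

Lemma free2_or_multiple u v : u != 0 -> free2 u v \/ exists c, v = c *: u.
Proof.
move=> u0; have [mul | nmul] := classic (exists c, v = c *: u); first by right.
by left; exact: free2_nmultiple.
Qed.

End LinePairs.

Lemma poly_eq0_horner (D : numDomainType) (p : {poly D}) :
  (forall x, p.[x] = 0) -> p = 0.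
Proof.
move=> p0; apply: (@roots_geq_poly_eq0 _ p [seq i%:R | i <- iota 0 (size p)]).
- by apply/allP => x /mapP [j _ ->]; apply/rootP.
- by rewrite map_inj_uniq ?iota_uniq // => a b /eqP; rewrite eqr_nat => /eqP.
- by rewrite size_map size_iota.
Qed.

Lemma horner_mmap_polyC (S : comNzRingType) n (p : {mpoly S[n]})
    (h : 'I_n -> {poly S}) x :
  (mmap (@polyC S) h p).[x] = p.@[fun k => (h k).[x]].
Proof.
rewrite mevalE -horner_evalE /mmap rmorph_sum; apply: eq_bigr => mo _.
rewrite rmorphM /= horner_evalE hornerC /mmap1 rmorph_prod; congr (_ * _).
by apply: eq_bigr => i _; rewrite rmorphXn /= horner_evalE.
Qed.

Lemma meval_line_eq0 (D : numDomainType) n (p : {mpoly D[n]}) (x y : 'rV[D]_n)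
    (G : {poly D}) : G != 0 ->
  (forall s, G.[s] != 0 -> p.@[fun k => (s *: x + y) 0 k] = 0) ->
  forall s, p.@[fun k => (s *: x + y) 0 k] = 0.
Proof.
move=> G0 p0 s.
pose H := mmap (@polyC D) (fun k => 'X * (x 0 k)%:P + (y 0 k)%:P) p.
have HE l : H.[l] = p.@[fun k => (l *: x + y) 0 k].
  by rewrite horner_mmap_polyC; apply: meval_eq => k; rewrite !hornerE !mxE.
have /eqP : H * G = 0.
  apply: poly_eq0_horner => l; rewrite hornerM.
  by have [-> | Gl] := eqVneq G.[l] 0; rewrite ?mulr0 // HE p0 ?mul0r.
by rewrite mulf_eq0 (negbTE G0) orbF => /eqP H0; rewrite -HE H0 horner0.
Qed.

Section QuadraticMap.
Variable R : realType.
Local Notation K := R[i].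

Section ProjEq.
Variable m : nat.
Implicit Types y z : 'rV[K]_m.

Lemma proj_eq_refl y : proj_eq y y.
Proof. by exists 1; rewrite ?oner_eq0 ?scale1r. Qed.

Lemma proj_eq_sym y z : proj_eq y z -> proj_eq z y.
Proof.
by move=> [c c0 ->]; exists c^-1; rewrite ?invr_eq0 // scalerA mulVf ?scale1r.
Qed.

Lemma proj_eq_trans y z w : proj_eq y z -> proj_eq z w -> proj_eq y w.
Proof. by move=> [c c0 ->] [d d0 ->]; exists (d * c); rewrite ?mulf_neq0 ?scalerA. Qed.

Lemma proj_eq_of_scale y z c : z = c *: y -> z != 0 -> proj_eq y z.
Proof.
by move=> zy z0; exists c => //; apply/eqP => c0; move: z0; rewrite zy c0 scale0r eqxx.
Qed.

Lemma proj_eq_of_cross y z : y != 0 -> z != 0 ->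
  (forall j k, y 0 k * z 0 j = y 0 j * z 0 k) -> proj_eq y z.
Proof.
move=> y0 z0 cross.
have [j0 yj0] : exists j, y 0 j != 0.
  apply: NNPP => ny; move/eqP: y0; apply; apply/rowP => j; rewrite mxE.
  by apply: NNPP => yj; apply: ny; exists j; apply/eqP.
have zE : z = (z 0 j0 / y 0 j0) *: y.
  by apply/rowP => k; rewrite mxE; apply: (mulfI yj0); rewrite -cross; field.
exact: proj_eq_of_scale zE z0.
Qed.

Lemma free2_nproj_eq y z : free2 y z -> ~ proj_eq y z.
Proof.
move=> free_yz [c _ zE]; have [_ /eqP] : c = 0 /\ (-1 : K) = 0.
  by apply: free_yz; rewrite scaleN1r zE subrr.
by rewrite oppr_eq0 oner_eq0.
Qed.

End ProjEq.

Definition bilform n (M : 'M[K]_n) (x z : 'rV[K]_n) : K := (x *m M *m z^T) 0 0.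

Lemma qform_comb2 n (M : 'M[K]_n) (x z : 'rV[K]_n) s t :
  qform M (s *: x + t *: z) =
  s ^+ 2 * qform M x + s * t * (bilform M x z + bilform M z x) + t ^+ 2 * qform M z.
Proof.
rewrite /qform /bilform.
have -> : (s *: x + t *: z)^T = s *: x^T + t *: z^T by apply/matrixP => i k; rewrite !mxE.
rewrite !mulmxDl !mulmxDr -!scalemxAl -!scalemxAr.
move: (x *m M *m x^T) (x *m M *m z^T) (z *m M *m x^T) (z *m M *m z^T).
by move=> p1 p2 p3 p4; rewrite !mxE; ring.
Qed.

Section Phi.
Variables (n m : nat) (A : 'I_m -> 'M[K]_n).
Implicit Types x z : 'rV[K]_n.

Definition Phi_polar x z : 'rV[K]_m :=
  \row_j (bilform (A j) x z + bilform (A j) z x).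

Lemma Phi_comb2 x z s t :
  Phi A (s *: x + t *: z) =
  s ^+ 2 *: Phi A x + (s * t) *: Phi_polar x z + t ^+ 2 *: Phi A z.
Proof. by apply/rowP => j; rewrite !mxE qform_comb2. Qed.

Lemma PhiZ x c : Phi A (c *: x) = c ^+ 2 *: Phi A x.
Proof.
have := Phi_comb2 x 0 c 0; rewrite scaler0 addr0 => ->.
by rewrite mulr0 scale0r expr0n /= scale0r !addr0.
Qed.

Lemma Phi_neq0 x : Phi A x != 0 -> x != 0.
Proof. by apply: contraNneq => ->; rewrite -(scale0r 0) PhiZ expr0n scale0r. Qed.

End Phi.

Definition qform_mpoly n (M : 'M[K]_n) : {mpoly K[n]} :=
  \sum_(a < n) \sum_(b < n) M a b *: ('X_a * 'X_b).

Lemma meval_qform_mpoly n (M : 'M[K]_n) (x : 'rV[K]_n) :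
  (qform_mpoly M).@[fun k => x 0 k] = qform M x.
Proof.
rewrite /qform_mpoly /qform mxE raddf_sum /=.
under eq_bigr => a _ do rewrite raddf_sum /=.
under [RHS]eq_bigr => b _ do rewrite mxE mulr_suml.
rewrite exchange_big /=; apply: eq_bigr => a _; apply: eq_bigr => b _.
by rewrite mevalZ mevalM !mevalXU !mxE; ring.
Qed.

Section GoodLine.
Variables (n m : nat) (A : 'I_m -> 'M[K]_n) (x1 x2 : 'rV[K]_n) (g : K).
Hypotheses (free_x : free2 x1 x2) (a0 : Phi A x1 != 0) (g0 : g != 0)
  (Phi_x2 : Phi A x2 = g *: Phi A x1)
  (polar_nmul : ~ exists c, Phi_polar A x1 x2 = c *: Phi A x1).
Local Notation a := (Phi A x1).
Local Notation b := (Phi_polar A x1 x2).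
Local Notation L := (col_mx x1 x2).
Implicit Types (x : 'rV[K]_n) (y : 'rV[K]_m) (p q c e s t sg : K).

Lemma free2_Phi_polar : free2 a b.
Proof. exact: free2_nmultiple. Qed.

Lemma Phi_line s t :
  Phi A (s *: x1 + t *: x2) = (s ^+ 2 + g * t ^+ 2) *: a + (s * t) *: b.
Proof. by rewrite Phi_comb2 Phi_x2 scalerA scalerDl (mulrC g) addrAC. Qed.

Lemma Phi_line_misses_base : line_misses_base A x1 x2.
Proof.
move=> x x0 /sub_col_mx2P [s [t xE]]; move: x0; rewrite xE Phi_line => x0.
apply/eqP => /free2_Phi_polar [st0 /eqP]; rewrite mulf_eq0 => /orP [] /eqP st_0;
  move: st0 x0; rewrite st_0 expr0n /= ?add0r ?addr0.
- move=> /eqP; rewrite mulf_eq0 (negbTE g0) /= expf_eq0 /= => /eqP ->.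
  by rewrite !scale0r addr0 eqxx.
- rewrite mulr0 addr0 => /eqP; rewrite expf_eq0 /= => /eqP ->.
  by rewrite !scale0r addr0 eqxx.
Qed.

Lemma proj_eq_Phi_line x y c :
  x != 0 -> (x <= L)%MS -> Phi A x = c *: y -> proj_eq y (Phi A x).
Proof. by move=> x0 xL /proj_eq_of_scale; apply; apply: Phi_line_misses_base. Qed.

Lemma Phi_line_eq x c p q : (x <= L)%MS -> Phi A x = c *: (p *: a + q *: b) ->
  exists s t, [/\ x = s *: x1 + t *: x2, s ^+ 2 + g * t ^+ 2 = c * p & s * t = c * q].
Proof.
move=> /sub_col_mx2P [s [t ->]]; rewrite Phi_line scalerDr !scalerA => e.
by have [] := free2_coef free2_Phi_polar e; exists s, t.
Qed.

Lemma line_quad_factor p q e sg : q != 0 -> e ^+ 2 = p ^+ 2 - 4 * q ^+ 2 * g ->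
  q * sg ^+ 2 - p * sg + q * g =
  q * (sg - (p + e) / (2 * q)) * (sg - (p - e) / (2 * q)).
Proof.
move=> q0 eE; have -> : g = (p ^+ 2 - e ^+ 2) / (4 * q ^+ 2).
  by rewrite eE; field.
by field.
Qed.

Lemma line_quad_root p q e : q != 0 -> e ^+ 2 = p ^+ 2 - 4 * q ^+ 2 * g ->
  let sg := (p + e) / (2 * q) in q * sg ^+ 2 - p * sg + q * g = 0.
Proof. by move=> q0 eE /=; rewrite (line_quad_factor _ q0 eE) subrr mulr0 mul0r. Qed.

Lemma Phi_line_root p q sg : q != 0 -> q * sg ^+ 2 - p * sg + q * g = 0 ->
  Phi A (sg *: x1 + x2) = (sg / q) *: (p *: a + q *: b).
Proof.
move=> q0 root_sg; have := Phi_line sg 1; rewrite scale1r => ->.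
rewrite scalerDr !scalerA expr1n !mulr1.
congr (_ *: _ + _ *: _); last by field.
apply: (mulfI q0); have -> : q * (sg / q * p) = p * sg by field.
by apply/eqP; rewrite -subr_eq0 -root_sg; apply/eqP; ring.
Qed.

Lemma line_point_root x p q c : q != 0 -> c != 0 -> (x <= L)%MS ->
  Phi A x = c *: (p *: a + q *: b) ->
  exists s t, [/\ t != 0, x = t *: ((s / t) *: x1 + x2) &
                  q * (s / t) ^+ 2 - p * (s / t) + q * g = 0].
Proof.
move=> q0 c0 xL /(Phi_line_eq xL) [s [t [-> e1 e2]]].
have t0 : t != 0.
  apply/eqP => t0; move/eqP: e2.
  by rewrite t0 mulr0 eq_sym mulf_eq0 (negbTE c0) (negbTE q0).
exists s, t; split => //; first by rewrite scalerDr scalerA mulrC divfK.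
apply: (mulfI (expf_neq0 2 t0)); rewrite mulr0.
have -> : t ^+ 2 * (q * (s / t) ^+ 2 - p * (s / t) + q * g) =
          q * (s ^+ 2 + g * t ^+ 2) - p * (s * t) by field.
by rewrite e1 e2; ring.
Qed.

Lemma Phi_line_onto y : y != 0 -> (y <= col_mx a b)%MS ->
  exists x, [/\ x != 0, (x <= L)%MS & proj_eq y (Phi A x)].
Proof.
move=> y0 /sub_col_mx2P [p [q yE]]; have [q_0 | q0] := eqVneq q 0.
  have p0 : p != 0 by apply: contraNneq y0 => p0; rewrite yE p0 q_0 !scale0r addr0.
  exists x1; split; rewrite ?sub_col_mx2l ?(free2_neq0l free_x) //.
  apply: (proj_eq_of_scale (c := p^-1)) => //.
  by rewrite yE q_0 scale0r addr0 scalerA mulVf // scale1r.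
have eE := sqrtCK (p ^+ 2 - 4 * q ^+ 2 * g).
pose x := ((p + sqrtC (p ^+ 2 - 4 * q ^+ 2 * g)) / (2 * q)) *: x1 + x2.
have x0 : x != 0 by apply: free2_comb1_neq0.
exists x; split; rewrite ?comb1_sub_col_mx2 //.
by apply: proj_eq_Phi_line x0 _ _; rewrite ?comb1_sub_col_mx2 // yE
  (Phi_line_root q0 (line_quad_root q0 eE)).
Qed.

(* The images where the discriminant p^2 - 4 q^2 g vanishes. *)
Definition branch_points := [:: (2 * sqrtC g) *: a + b; (- (2 * sqrtC g)) *: a + b].

Lemma branch_point_of_disc0 p q : q != 0 -> p ^+ 2 - 4 * q ^+ 2 * g = 0 ->
  exists2 e, e \in branch_points & proj_eq e (p *: a + q *: b).
Proof.
move=> q0 disc0; set rho := sqrtC g; have rhoE : rho ^+ 2 = g by rewrite sqrtCK.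
have /eqP : (p - 2 * q * rho) * (p + 2 * q * rho) = 0 by rewrite -disc0 -rhoE; ring.
rewrite mulf_eq0 subr_eq0 addr_eq0 => /orP [] /eqP ->.
- exists ((2 * rho) *: a + b); first exact: mem_head.
  by exists q => //; rewrite scalerDr scalerA mulrCA mulrA.
- exists ((- (2 * rho)) *: a + b); first by rewrite /branch_points !inE eqxx orbT.
  by exists q => //; rewrite scalerDr scalerA mulrN mulrCA mulrA.
Qed.

Lemma two_preimages_axis p : p != 0 -> two_preimages A x1 x2 (p *: a).
Proof.
move=> p0; have x1L := sub_col_mx2l x1 x2; have x2L := sub_col_mx2r x1 x2.
have x10 := free2_neq0l free_x; have x20 := free2_neq0r free_x.
exists x1, x2; split=> //; split.
- exact: free2_nproj_eq.
- by apply: (proj_eq_Phi_line (c := p^-1)); rewrite // scalerA mulVf ?scale1r.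
- by apply: (proj_eq_Phi_line (c := g / p)); rewrite // Phi_x2 scalerA mulfVK.
move=> x x0 xL [c _ xE].
have [s [t [{}xE _ /eqP]]] : exists s t, [/\ x = s *: x1 + t *: x2,
    s ^+ 2 + g * t ^+ 2 = c * p & s * t = c * 0].
  by apply: Phi_line_eq => //; rewrite xE scale0r addr0.
rewrite mulr0 mulf_eq0 => /orP [] /eqP st0; move: x0; rewrite xE st0 scale0r.
- by rewrite add0r => x0; right; apply: proj_eq_of_scale.
- by rewrite addr0 => x0; left; apply: proj_eq_of_scale.
Qed.

Lemma two_preimages_generic p q : q != 0 -> p ^+ 2 - 4 * q ^+ 2 * g != 0 ->
  two_preimages A x1 x2 (p *: a + q *: b).
Proof.
move=> q0 disc0; set e := sqrtC (p ^+ 2 - 4 * q ^+ 2 * g).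
have eE : e ^+ 2 = p ^+ 2 - 4 * q ^+ 2 * g by rewrite sqrtCK.
have eE' : (- e) ^+ 2 = p ^+ 2 - 4 * q ^+ 2 * g by rewrite sqrrN.
set sg1 := (p + e) / (2 * q); set sg2 := (p - e) / (2 * q).
exists (sg1 *: x1 + x2), (sg2 *: x1 + x2); split;
  rewrite ?free2_comb1_neq0 ?comb1_sub_col_mx2 //; split.
- move=> [c _ /eqP]; rewrite scalerDr scalerA -{1}[x2]scale1r.
  move=> /eqP /(free2_coef free_x) [sgE c1]; rewrite -c1 mul1r in sgE.
  move/eqP: disc0; apply; rewrite -eE.
  have -> : e = (sg1 - sg2) * q by rewrite /sg1 /sg2; field.
  by rewrite sgE subrr mul0r expr0n.
- apply: (proj_eq_Phi_line (c := sg1 / q));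
    rewrite ?free2_comb1_neq0 ?comb1_sub_col_mx2 //.
  exact: Phi_line_root q0 (line_quad_root q0 eE).
- apply: (proj_eq_Phi_line (c := sg2 / q));
    rewrite ?free2_comb1_neq0 ?comb1_sub_col_mx2 //.
  exact: Phi_line_root q0 (line_quad_root q0 eE').
move=> x x0 xL [c c0 /(line_point_root q0 c0 xL) [s [t [t0 xE]]]].
rewrite (line_quad_factor _ q0 eE) => /eqP; rewrite !mulf_eq0 (negbTE q0) /= !subr_eq0.
move=> /orP [] /eqP sE; move: x0; rewrite xE sE => x0.
- by left; apply: proj_eq_of_scale x0.
- by right; apply: proj_eq_of_scale x0.
Qed.

Lemma double_cover_line : double_cover_of_line A x1 x2.
Proof.
exists a, b; split.
- exact/free2P/free2_Phi_polar.
- by move=> x _ /sub_col_mx2P [s [t ->]]; rewrite Phi_line comb_sub_col_mx2.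
- exact: Phi_line_onto.
exists branch_points => y y0 /sub_col_mx2P [p [q yE]] not_branch; rewrite yE.
have [q_0 | q0] := eqVneq q 0.
  rewrite q_0 scale0r addr0; apply: two_preimages_axis.
  by apply: contraNneq y0 => p0; rewrite yE p0 q_0 !scale0r addr0.
apply: two_preimages_generic => //; apply/eqP => disc0.
by have [e /not_branch] := branch_point_of_disc0 q0 disc0; rewrite -yE.
Qed.

End GoodLine.

Lemma good_line_of_polar n m (A : 'I_m -> 'M[K]_n) (x1 x2 : 'rV[K]_n) (g : K) :
  free2 x1 x2 -> Phi A x1 != 0 -> g != 0 -> Phi A x2 = g *: Phi A x1 ->
  ~ (exists c, Phi_polar A x1 x2 = c *: Phi A x1) -> good_line A x1 x2.
Proof.
move=> free_x a0 g0 Phi_x2 polar_nmul; split; first exact/free2P.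
- exact: (Phi_line_misses_base (g := g)).
- exact: (double_cover_line (g := g)).
Qed.

Section Fibre.
Variables (n m : nat) (A : 'I_m -> 'M[K]_n) (P : 'rV[K]_n).
Local Notation F := (fibre A P).
Implicit Types (x y z : 'rV[K]_n) (p : {mpoly K[n]}).

Definition Phi_preimage z := Phi A z != 0 /\ proj_eq (Phi A P) (Phi A z).

Definition vanishes_on_preimage p :=
  forall z, z != 0 -> Phi_preimage z -> p.@[fun k => z 0 k] = 0.

Lemma Phi_preimage_fibre z : Phi_preimage z -> F z.
Proof. by move=> Pz p p0; apply: p0 => //; apply: Phi_neq0 Pz.1. Qed.

Lemma vanish_quadratic_line x1 x2 t0 (be ga : K) p :
  Phi_preimage x1 ->
  (forall s, Phi A (s *: x1 + t0 *: x2) = (s ^+ 2 + be * s + ga) *: Phi A x1) ->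
  vanishes_on_preimage p -> forall s, p.@[fun k => (s *: x1 + t0 *: x2) 0 k] = 0.
Proof.
move=> [a0 [c c0 aE]] Phi_line p0.
pose G : {poly K} := 'X ^+ 2 + be%:P * 'X + ga%:P.
apply: (meval_line_eq0 (G := G)).
  apply/eqP => /(congr1 (fun q : {poly K} => q`_2)).
  rewrite !coefD coefXn coefC coefCM coefX coef0 /= mulr0 !addr0.
  by move=> /eqP; rewrite oner_eq0.
move=> s Gs; have PhiE : Phi A (s *: x1 + t0 *: x2) = G.[s] *: Phi A x1.
  by rewrite Phi_line !hornerE.
have Phi0 : Phi A (s *: x1 + t0 *: x2) != 0 by rewrite PhiE scaler_eq0 negb_or Gs.
apply: p0; [exact: Phi_neq0 Phi0 | split=> //].
by exists (G.[s] * c); rewrite ?mulf_neq0 // PhiE aE scalerA.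
Qed.

Hypothesis no_good_line : forall u v, ~ good_line A u v.

Lemma vanish_preimage_line x1 x2 p : Phi_preimage x1 -> Phi_preimage x2 ->
  vanishes_on_preimage p -> forall s t, p.@[fun k => (s *: x1 + t *: x2) 0 k] = 0.
Proof.
move=> Px1 Px2 p0 s t; have [a0 [c1 c10 aE]] := Px1; have [_ [c2 c20 bE]] := Px2.
have Phi_x2 : Phi A x2 = (c2 / c1) *: Phi A x1 by rewrite aE bE scalerA divfK.
have [free_x | [c ->]] := free2_or_multiple x2 (Phi_neq0 a0).
- have [[be polarE] | polar_nmul] := classic (exists c, Phi_polar A x1 x2 = c *: Phi A x1).
    apply: (vanish_quadratic_line (be := be * t) (ga := c2 / c1 * t ^+ 2) Px1 _ p0).
    by move=> s'; rewrite Phi_comb2 polarE Phi_x2; apply/rowP => j; rewrite !mxE; ring.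
  case: (no_good_line (good_line_of_polar free_x a0 _ Phi_x2 polar_nmul)).
  by rewrite mulf_neq0 ?invr_eq0.
- apply: (vanish_quadratic_line (be := 2 * (t * c)) (ga := (t * c) ^+ 2) Px1 _ p0).
  by move=> s'; rewrite scalerA -scalerDl PhiZ; congr (_ *: _); ring.
Qed.

Lemma fibre_comb y x s t : Phi_preimage y -> F x -> F (s *: y + t *: x).
Proof.
move=> Py Fx p p0.
pose q := p \mPo [tuple (s * y 0 i)%:MP + t *: 'X_i | i < n].
have qE z : q.@[fun k => z 0 k] = p.@[fun k => (s *: y + t *: z) 0 k].
  rewrite comp_mpoly_meval; apply: meval_eq => i.
  by rewrite tnth_mktuple mevalD mevalC mevalZ mevalXU !mxE.
by rewrite -qE; apply: Fx => z z0 Pz; rewrite qE; apply: vanish_preimage_line.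
Qed.

Definition sub_fibre (V : 'M[K]_n) := forall x, (x <= V)%MS -> x != 0 -> F x.

Lemma sub_fibre0 : sub_fibre 0.
Proof. by move=> x; rewrite submx0 => /eqP ->; rewrite eqxx. Qed.

Lemma sub_fibre_adds (V : 'M[K]_n) y :
  sub_fibre V -> Phi_preimage y -> sub_fibre (V + y)%MS.
Proof.
move=> FV Py x /sub_addsmxP [[u1 u2] /= ->]; rewrite (mx11_scalar u2) mul_scalar_mx => _.
have [-> | v0] := eqVneq (u1 *m V) 0.
  by have := fibre_comb (u2 0 0) 0 Py (Phi_preimage_fibre Py); rewrite scale0r !addr0 add0r.
have := fibre_comb (u2 0 0) 1 Py (FV _ (submxMl u1 V) v0).
by rewrite scale1r addrC.
Qed.

Lemma span_preimage_sub_fibre :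
  exists V : 'M[K]_n, sub_fibre V /\ forall y, Phi_preimage y -> (y <= V)%MS.
Proof.
suff grow k (V : 'M[K]_n) : (n - \rank V <= k)%N -> sub_fibre V ->
    exists W : 'M[K]_n, sub_fibre W /\ forall y, Phi_preimage y -> (y <= W)%MS.
  by apply: (grow n 0); [exact: leq_subr | exact: sub_fibre0].
elim: k V => [|k IHk] V rkV FV.
  exists V; split => // y _; apply: submx_full.
  by rewrite /row_full eqn_leq rank_leq_col -subn_eq0 -leqn0.
have [yV | [y Py yV]] : (forall y, Phi_preimage y -> (y <= V)%MS) \/
    exists2 y, Phi_preimage y & ~~ (y <= V)%MS.
  have [|nyV] := classic (exists2 y, Phi_preimage y & ~~ (y <= V)%MS); first by right.
  by left => y Py; apply: NNPP => /negP yV; apply: nyV; exists y.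
  by exists V.
apply: (IHk (V + y)%MS); last exact: sub_fibre_adds.
have [rk_le rk_eq] := mxrank_leqif_sup (addsmxSl V y).
have : (\rank V < \rank (V + y))%N.
  rewrite ltn_neqAle rk_le andbT rk_eq; apply: contra yV.
  exact: submx_trans (addsmxSr V y).
by move: (rank_leq_col (V + y)%MS) rkV; lia.
Qed.

Lemma fibre_linear : is_linear_space F.
Proof.
have [V [FV preimV]] := span_preimage_sub_fibre.
exists V => x x0; split=> [Fx | xV]; last exact: FV.
rewrite submxE; apply/eqP/rowP => k.
pose pk : {mpoly K[n]} := \sum_(i < n) cokermx V i k *: 'X_i.
have pkE z : pk.@[fun j => z 0 j] = (z *m cokermx V) 0 k.
  by rewrite /pk raddf_sum mxE; apply: eq_bigr => i _ /=; rewrite mevalZ mevalXU mulrC.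
rewrite [RHS]mxE -pkE; apply: Fx => z _ Pz.
have /eqP zV : z *m cokermx V == 0 by rewrite -submxE; exact: preimV.
by rewrite pkE zV mxE.
Qed.

End Fibre.

Lemma fibre_proj_eq n m (A : 'I_m -> 'M[K]_n) (P x : 'rV[K]_n) :
  fibre A P x -> Phi A P != 0 -> Phi A x != 0 -> proj_eq (Phi A P) (Phi A x).
Proof.
move=> Fx P0 x0; apply: proj_eq_of_cross => // j k.
pose pc := Phi A P 0 k *: qform_mpoly (A j) - Phi A P 0 j *: qform_mpoly (A k).
have pcE (z : 'rV[K]_n) :
    pc.@[fun i => z 0 i] = Phi A P 0 k * Phi A z 0 j - Phi A P 0 j * Phi A z 0 k.
  by rewrite mevalB !mevalZ !meval_qform_mpoly [Phi A z 0 j]mxE [Phi A z 0 k]mxE.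
apply/eqP; rewrite -subr_eq0 -pcE; apply/eqP; apply: Fx => z _ [_ [c _ zE]].
by rewrite pcE zE !mxE; ring.
Qed.

Section AvoidPoints.
Variables (m : nat) (w1 w2 : 'rV[K]_m).
Hypothesis free_w : free2 w1 w2.

Lemma nproj_eq_comb_eventually e :
  exists B, forall N, (B <= N)%N -> ~ proj_eq e (N%:R *: w1 + w2).
Proof.
have [[N0 eN0] | never] := classic (exists N0 : nat, proj_eq e (N0%:R *: w1 + w2)).
  exists N0.+1 => N ltN0N eN; have [c _] := proj_eq_trans (proj_eq_sym eN0) eN.
  rewrite scalerDr scalerA -{1}[w2]scale1r => /(free2_coef free_w) [/eqP NE c1].
  by move: NE; rewrite -c1 mul1r eqr_nat => /eqP NE; rewrite NE ltnn in ltN0N.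
by exists 0%N => N _ eN; apply: never; exists N.
Qed.

Lemma exists_comb_nproj_eq (E : seq 'rV[K]_m) :
  exists N : nat, forall e, e \in E -> ~ proj_eq e (N%:R *: w1 + w2).
Proof.
suff [B BE] : exists B, forall N, (B <= N)%N ->
    forall e, e \in E -> ~ proj_eq e (N%:R *: w1 + w2) by exists B; apply: BE.
elim: E => [|e E [B BE]]; first by exists 0%N.
have [B' B'e] := nproj_eq_comb_eventually e.
exists (maxn B B') => N; rewrite geq_max => /andP [BN B'N] e'.
by rewrite inE => /orP [/eqP -> | /(BE N BN)]; [apply: B'e |].
Qed.

End AvoidPoints.

Section GoodLineFibres.
Variables (n m : nat) (A : 'I_m -> 'M[K]_n) (u v : 'rV[K]_n).
Hypothesis good_uv : good_line A u v.
Local Notation L := (col_mx u v).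

Lemma good_line_Phi_nproj : exists x x', [/\ x != 0, x' != 0, (x <= L)%MS,
  (x' <= L)%MS & ~ proj_eq (Phi A x) (Phi A x')].
Proof.
have [_ _ [w1 [w2 [/free2P free_w _ onto _]]]] := good_uv.
have [x [x0 xL w1x]] := onto w1 (free2_neq0l free_w) (sub_col_mx2l w1 w2).
have [x' [x'0 x'L w2x']] := onto w2 (free2_neq0r free_w) (sub_col_mx2r w1 w2).
exists x, x'; split=> // xx'; apply: (free2_nproj_eq free_w).
exact: proj_eq_trans (proj_eq_trans w1x xx') (proj_eq_sym w2x').
Qed.

Lemma good_line_preimage_pair : exists x1 x2,
  [/\ Phi A x1 != 0, Phi_preimage A x1 x2 & (L <= col_mx x1 x2)%MS].
Proof.
have [rkL misses [w1 [w2 [/free2P free_w _ _ [E two_pre]]]]] := good_uv.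
have [N NE] := exists_comb_nproj_eq free_w E.
have [x1 [x2 [x10 x20 x1L x2L [nx12 yx1 yx2 _]]]] :=
  two_pre _ (free2_comb1_neq0 _ free_w) (comb1_sub_col_mx2 _ _ _) NE.
exists x1, x2; split; first exact: misses.
  by split; [exact: misses | exact: proj_eq_trans (proj_eq_sym yx1) yx2].
have free_x : free2 x1 x2.
  by apply: free2_nmultiple x10 _ => -[c x2E]; apply: nx12; apply: proj_eq_of_scale x2E x20.
have xL : (col_mx x1 x2 <= L)%MS by rewrite col_mx_sub x1L x2L.
have [_ <-] := mxrank_leqif_sup xL.
by rewrite rkL (free2P _ _).2.
Qed.

Lemma good_line_nonlinear_fibre :
  exists P, [/\ P != 0, Phi A P != 0 & ~ is_linear_space (fibre A P)].
Proof.
have [x1 [x2 [a0 Px2 Lx]]] := good_line_preimage_pair.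
have x10 := Phi_neq0 a0.
exists x1; split=> // -[V VE].
have Px1 : Phi_preimage A x1 x1 by split=> //; apply: proj_eq_refl.
have LV : (L <= V)%MS.
  apply: submx_trans Lx _; rewrite col_mx_sub.
  apply/andP; split.
    by apply/(VE _ x10); apply: Phi_preimage_fibre Px1.
  by apply/(VE _ (Phi_neq0 Px2.1)); apply: Phi_preimage_fibre Px2.
have [_ misses _] := good_uv.
have [x [x' [x0 x'0 xL x'L nxx']]] := good_line_Phi_nproj.
have Fx : fibre A x1 x by apply/(VE _ x0); exact: submx_trans xL LV.
have Fx' : fibre A x1 x' by apply/(VE _ x'0); exact: submx_trans x'L LV.
apply: nxx'; apply: proj_eq_trans (proj_eq_sym (fibre_proj_eq Fx a0 _)) _.
  exact: misses.
exact: fibre_proj_eq Fx' a0 (misses _ x'0 x'L).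
Qed.

End GoodLineFibres.

Lemma good_line_in_W n m (A : 'I_m -> 'M[K]_n) (u v : 'rV[K]_n) :
  good_line A u v -> in_W A u v.
Proof. by move=> good_uv; split=> [|p]; [case: good_uv | apply]. Qed.

Lemma in_W_good_line n m (A : 'I_m -> 'M[K]_n) (u v : 'rV[K]_n) :
  in_W A u v -> exists u' v', good_line A u' v'.
Proof.
move=> [_ W1]; apply: NNPP => no_good.
have /eqP : (1 : {mpoly K[n * n]}).@[fun k => pluecker u v 0 k] = 0.
  by apply: W1 => u' v' good_uv'; case: no_good; exists u', v'.
by rewrite meval1 oner_eq0.
Qed.

End QuadraticMap.

Theorem corollary4p4 (R : realType) (r alpha : nat)
  (A : 'I_alpha.+1 -> 'M[R[i]]_r.+1) :
  lin_indep_quadrics A ->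
  ((forall u v : 'rV[R[i]]_r.+1, ~ in_W A u v) <->
   (forall P : 'rV[R[i]]_r.+1, P != 0 -> Phi A P != 0 ->
      is_linear_space (fibre A P))).
Proof.
move=> _; split=> [no_W P _ _ | linear u v /in_W_good_line [u' [v' good_uv']]].
  by apply: fibre_linear => u v /good_line_in_W; apply: no_W.
have [P [P0 PhiP0 nonlinear]] := good_line_nonlinear_fibre good_uv'.
exact: nonlinear (linear P P0 PhiP0).
Qed.
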